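(* Let $n,p$ be positive integers with $n-p-1>0$ and $\gamma\ge0$, and let $\pi_{\mathrm{MSVS1}}(M)=\det(M^\top M)^{-(n-p-1)/2}\|M\|_{\mathrm F}^{-\gamma}$ on $\mathbb R^{n\times p}$. Then at every $M$ with $M^\top M$ nonsingular, $$\Delta\pi_{\mathrm{MSVS1}}(M)=\gamma(\gamma+np-2p^2-2p+2)\|M\|_{\mathrm F}^{-2}\pi_{\mathrm{MSVS1}}(M),$$ where $\Delta=\sum_{a=1}^n\sum_{i=1}^p\partial^2/\partial M_{ai}^2$. *)

From HB Require Import structures.
From mathcomp Require Import all_boot all_order all_algebra.
From mathcomp Require Import all_classical all_reals all_analysis.
Set Implicit Arguments. Unset Strict Implicit. Unset Printing Implicit Defensive.
Import Order.TTheory GRing.Theory Num.Theory.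
Local Open Scope ring_scope.

Definition frob (R : realType) (n p : nat) (M : 'M[R]_(n, p)) : R :=
  Num.sqrt (\sum_(a < n) \sum_(i < p) M a i ^+ 2).

Definition pi_MSVS1 (R : realType) (n p : nat) (gamma : R) (M : 'M[R]_(n, p)) : R :=
  powR (\det (M^T *m M)) (- ((n%:R - p%:R - 1) / 2))
  * powR (frob M) (- gamma).

Definition coord_line (R : realType) (n p : nat) (f : 'M[R]_(n, p) -> R)
  (M : 'M[R]_(n, p)) (a : 'I_n) (i : 'I_p) : R -> R :=
  fun t => f (M + t *: delta_mx a i).

Definition d2_partial (R : realType) (n p : nat) (f : 'M[R]_(n, p) -> R)
  (M : 'M[R]_(n, p)) (a : 'I_n) (i : 'I_p) : R :=
  derive1 (derive1 (coord_line f M a i)) 0.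

Definition laplacian (R : realType) (n p : nat) (f : 'M[R]_(n, p) -> R)
  (M : 'M[R]_(n, p)) : R :=
  \sum_(a < n) \sum_(i < p) d2_partial f M a i.

From HB Require Import structures.
From mathcomp Require Import all_boot all_order all_algebra.
From mathcomp Require Import all_classical all_reals all_analysis.
From mathcomp Require Import ring.
Import Order.TTheory GRing.Theory Num.Theory numFieldNormedType.Exports.
Set Implicit Arguments. Unset Strict Implicit. Unset Printing Implicit Defensive.
Local Open Scope ring_scope.

(* Write S = M^T M, v = S^-1 M^T, rho_a = 1 - (M S^-1 M^T)_aa and s_i = (S^-1)_ii.
   Along the coordinate line t |-> M + t E_ai both factors of pi_MSVS1 are real
   powers of quadratics in t: ||M + t E_ai||_F^2 = ||M||_F^2 + 2 M_ai t + t^2, and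
   (M + t E_ai)^T (M + t E_ai) = P^T S P + t^2 rho_a E_ii with P = 1 + t S^-1 M^T e_a e_i^T,
   whence det = det S ((1 + t v_ia)^2 + t^2 rho_a s_i).  Writing the restriction as
   exp(L), its second derivative at 0 is pi_MSVS1 (L'' + L'^2), a polynomial in v_ia,
   M_ai and rho_a s_i.  Summing over a and i with sum v^2 = tr S^-1, sum v M = p and
   sum rho = n - p, the trace terms cancel and only a multiple of ||M||_F^-2 remains. *)

Definition quad (R : pzSemiRingType) (c0 c1 c2 t : R) : R := c0 + c1 * t + c2 * t ^+ 2.

Lemma quad0 (R : pzSemiRingType) (c0 c1 c2 : R) : quad c0 c1 c2 0 = c0.
Proof. by rewrite /quad mulr0 expr0n mulr0 !addr0. Qed.

Section PowQuadratic.
Variable R : realType.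

Lemma is_derive_quad (c0 c1 c2 t : R) :
  is_derive t 1 (quad c0 c1 c2) (c1 + c2 * (2 * t)).
Proof. by apply: is_derive_eq; rewrite /GRing.scale /=; ring. Qed.

Lemma near_gt0_is_derive (f : R -> R) (x df : R) :
  is_derive x 1 f df -> 0 < f x -> \forall y \near x, 0 < f y.
Proof.
move=> [f_derivable _] fx_gt0.
have f_cont : {for x, continuous f}.
  by apply: differentiable_continuous; apply/derivable1_diffP.
exact: cvgr_gt f_cont 0 fx_gt0.
Qed.

Variables (alpha beta d0 d1 d2 f0 f1 f2 : R).
Hypotheses (d0_gt0 : 0 < d0) (f0_gt0 : 0 < f0).

Let D := quad d0 d1 d2.
Let F := quad f0 f1 f2.
Let D' t := d1 + d2 * (2 * t).
Let F' t := f1 + f2 * (2 * t).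
Let h t := powR (D t) alpha * powR (F t) beta.
Let L1 t := alpha * (D' t / D t) + beta * (F' t / F t).
Let L2 t := alpha * (2 * d2 / D t - (D' t / D t) ^+ 2)
          + beta * (2 * f2 / F t - (F' t / F t) ^+ 2).

Let near0_DF_gt0 : \forall t \near 0, 0 < D t /\ 0 < F t.
Proof.
by near=> t; split; near: t; apply: near_gt0_is_derive (is_derive_quad _ _ _ 0) _;
  rewrite quad0.
Unshelve. all: by end_near.
Qed.

Let h_expR t : 0 < D t -> 0 < F t ->
  h t = expR (alpha * ln (D t) + beta * ln (F t)).
Proof.
by move=> Dt Ft; rewrite /h /powR !gt_eqF // expRD mulrC [beta * _]mulrC.
Qed.

Let is_derive_h t : 0 < D t -> 0 < F t -> is_derive t 1 h (h t * L1 t).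
Proof.
move=> Dt Ft.
have lnD := is_derive1_comp (is_derive1_ln Dt) (is_derive_quad d0 d1 d2 t).
have lnF := is_derive1_comp (is_derive1_ln Ft) (is_derive_quad f0 f1 f2 t).
have L_derive : is_derive t 1 (fun s => alpha * ln (D s) + beta * ln (F s)) (L1 t).
  by apply: is_derive_eq; rewrite /GRing.scale /= /L1 /D' /F'; ring.
have := is_derive1_comp (is_derive_expR _) L_derive.
rewrite -h_expR // => expRL_derive.
apply: near_eq_is_derive expRL_derive.
near=> s; rewrite h_expR //; near: s.
- exact: near_gt0_is_derive (is_derive_quad d0 d1 d2 t) Dt.
- exact: near_gt0_is_derive (is_derive_quad f0 f1 f2 t) Ft.
Unshelve. all: by end_near.
Qed.

Let is_derive_L1 t : 0 < D t -> 0 < F t -> is_derive t 1 L1 (L2 t).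
Proof.
move=> Dt Ft.
have invD := is_deriveV (lt0r_neq0 Dt) (is_derive_quad d0 d1 d2 t).
have invF := is_deriveV (lt0r_neq0 Ft) (is_derive_quad f0 f1 f2 t).
have D'_derive : is_derive t 1 D' (d2 * 2).
  by apply: is_derive_eq; rewrite /GRing.scale /=; ring.
have F'_derive : is_derive t 1 F' (f2 * 2).
  by apply: is_derive_eq; rewrite /GRing.scale /=; ring.
apply: is_derive_eq; rewrite /GRing.scale /= /L2 /D' /F'.
by field; rewrite !gt_eqF.
Qed.

Lemma derive2_powR_quad :
  let h t := powR (quad d0 d1 d2 t) alpha * powR (quad f0 f1 f2 t) beta in
  [/\ \forall t \near 0, derivable h t 1, derivable (derive1 h) 0 1 &
      derive1 (derive1 h) 0 = powR d0 alpha * powR f0 beta *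
        (alpha * (2 * d2 / d0 - (d1 / d0) ^+ 2) + beta * (2 * f2 / f0 - (f1 / f0) ^+ 2)
         + (alpha * (d1 / d0) + beta * (f1 / f0)) ^+ 2)].
Proof.
rewrite -/D -/F -/h.
have [D0 F0] : 0 < D 0 /\ 0 < F 0 by rewrite /D /F !quad0.
have h'_eq : \forall t \near 0, h t * L1 t = derive1 h t.
  near=> t; have [Dt Ft] : 0 < D t /\ 0 < F t by near: t; exact: near0_DF_gt0.
  by have := is_derive_h Dt Ft; rewrite derive1E => /@derive_val ->.
have h'_derive : is_derive (0 : R) 1 (fun t => h t * L1 t) (h 0 * (L2 0 + L1 0 ^+ 2)).
  have := is_derive_h D0 F0; have := is_derive_L1 D0 F0 => L1_derive h_derive.
  by apply: is_derive_eq; rewrite /GRing.scale /=; ring.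
split.
- near=> t; have [Dt Ft] : 0 < D t /\ 0 < F t by near: t; exact: near0_DF_gt0.
  by apply: ex_derive; exact: is_derive_h.
- by apply: near_eq_derivable h'_eq _; case: h'_derive.
rewrite derive1E -(near_eq_derive _ h'_eq) derive_val.
rewrite /h /L1 /L2 /D' /F'.
have -> : D 0 = d0 by rewrite /D quad0.
have -> : F 0 = f0 by rewrite /F quad0.
by rewrite !mulr0 !addr0.
Unshelve. all: by end_near.
Qed.

End PowQuadratic.

Section CofactorUpdate.
Variable R : comPzRingType.

Lemma eq_cofactor q (X Y : 'M[R]_q) i k :
  (forall j l, j != i -> l != k -> X j l = Y j l) -> cofactor X i k = cofactor Y i k.
Proof.
move=> XY; rewrite /cofactor; congr (_ * \det _); apply/matrixP => j l.
by rewrite !mxE XY // eq_sym neq_lift.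
Qed.

Lemma cofactor1 q (i k : 'I_q) : cofactor (1%:M : 'M[R]_q) i k = (i == k)%:R.
Proof.
have := congr1 (fun A : 'M[R]_q => A k i) (adj1 R q).
by rewrite /adjugate mxE => ->; rewrite mxE eq_sym.
Qed.

Lemma det_add_delta q (X : 'M[R]_q) c i k :
  \det (X + c *: delta_mx i k) = \det X + c * cofactor X i k.
Proof.
have cofE l : cofactor (X + c *: delta_mx i k) i l = cofactor X i l.
  by apply: eq_cofactor => j l' /negbTE ji _; rewrite !mxE ji mulr0 addr0.
rewrite (expand_det_row _ i) (expand_det_row X i).
under eq_bigr => l _ do rewrite cofE !mxE eqxx /= mulrDl.
rewrite big_split /=; congr (_ + _).
rewrite (bigD1 k) //= big1 ?addr0 => [|l /negbTE lk].
  by rewrite eqxx mulr1.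
by rewrite lk mulr0 mul0r.
Qed.

Lemma det1D_mul_delta q (u : 'cV[R]_q) i :
  \det (1%:M + u *m delta_mx 0 i) = 1 + u i 0.
Proof.
set P := 1%:M + _.
have P_off j l : l != i -> P j l = (1%:M : 'M[R]_q) j l.
  by move=> /negbTE li; rewrite !mxE big_ord1 !mxE li andbF mulr0 addr0.
have cofE j : cofactor P j i = (j == i)%:R.
  by rewrite (@eq_cofactor _ _ 1%:M) ?cofactor1 // => j' l _; exact: P_off.
rewrite (expand_det_col _ i) (bigD1 i) //= big1 => [|j /negbTE ji].
  by rewrite cofE eqxx mulr1 addr0 !mxE big_ord1 !mxE !eqxx mulr1.
by rewrite cofE ji mulr0.
Qed.

End CofactorUpdate.

Lemma cofactor_invmx (R : fieldType) q (S : 'M[R]_q) i k :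
  S \in unitmx -> cofactor S i k = \det S * invmx S k i.
Proof.
move=> S_unit; rewrite /invmx S_unit !mxE mulrA divff ?mul1r //.
by rewrite -unitfE -unitmxE.
Qed.

Section GramCoordLine.
Variables (R : fieldType) (n p : nat) (M : 'M[R]_(n, p)).
Hypothesis gram_unit : M^T *m M \in unitmx.
Variables (a : 'I_n) (i : 'I_p).

Let S := M^T *m M.
Let ea : 'cV[R]_n := delta_mx a 0.
Let ei : 'cV[R]_p := delta_mx i 0.
Let m := M^T *m ea.
Let w := invmx S *m m.
Let rho := 1 - (m^T *m w) 0 0.
Let P t := 1%:M + t *: (w *m ei^T).

Let gram_coord_line_expand t :
  (M + t *: delta_mx a i)^T *m (M + t *: delta_mx a i)
  = S + t *: (ei *m m^T + m *m ei^T) + t ^+ 2 *: (ei *m ei^T).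
Proof.
have -> : delta_mx a i = ea *m ei^T by rewrite trmx_delta mul_delta_mx.
have -> : (M + t *: (ea *m ei^T))^T = M^T + t *: (ei *m ea^T).
  by rewrite linearD linearZ /= trmx_mul trmxK.
have eaea : ea^T *m ea = 1%:M.
  by rewrite trmx_delta mul_delta_mx; apply/matrixP => x y; rewrite !ord1 !mxE.
rewrite mulmxDl !mulmxDr -!scalemxAl -!scalemxAr scalerA -expr2.
rewrite /m trmx_mul trmxK (mulmxA M^T) -(mulmxA ei ea^T M).
rewrite (mulmxA _ ea) -(mulmxA ei) eaea mulmx1.
by rewrite scalerDr !addrA (addrAC S).
Qed.

Let congruence_expand t :
  (P t)^T *m S *m P t
  = S + t *: (ei *m m^T + m *m ei^T) + (t ^+ 2 * (m^T *m w) 0 0) *: (ei *m ei^T).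
Proof.
have -> : (P t)^T = 1%:M + t *: (ei *m w^T).
  by rewrite linearD linearZ /= trmx1 trmx_mul trmxK.
have wS : w^T *m S = m^T.
  have invS_tr : (invmx S)^T = invmx S by rewrite trmx_inv /S trmx_mul trmxK.
  by rewrite /w trmx_mul invS_tr -mulmxA mulVmx // mulmx1.
have Sw : S *m w = m by rewrite /w mulmxA mulmxV // mul1mx.
rewrite !(mulmxDl, mulmxDr) !(mul1mx, mulmx1).
rewrite -!scalemxAl -!scalemxAr !scalerA -expr2.
rewrite -!(mulmxA ei w^T) wS (mulmxA S) Sw (mulmxA _ w) -(mulmxA ei m^T w).
rewrite (mx11_scalar (m^T *m w)) mul_mx_scalar -scalemxAl scalerA.
by rewrite scalerDr !addrA [in RHS]mxE eqxx mulr1n (addrAC S).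
Qed.

Let gram_coord_line_congruence t :
  (M + t *: delta_mx a i)^T *m (M + t *: delta_mx a i)
  = (P t)^T *m S *m P t + (t ^+ 2 * rho) *: delta_mx i i.
Proof.
rewrite gram_coord_line_expand congruence_expand /ei trmx_delta mul_delta_mx.
by rewrite -[RHS]addrA -scalerDl /rho; congr (_ + _ *: _); ring.
Qed.

Let congruence_off t j l : j != i -> l != i -> ((P t)^T *m S *m P t) j l = S j l.
Proof.
move=> /negbTE ji /negbTE li; rewrite congruence_expand /ei trmx_delta !mul_delta_mx.
by rewrite !mxE !big_ord1 !mxE ji li andbF /= !(mulr0, mul0r, addr0).
Qed.

Lemma det_gram_coord_line t :
  \det ((M + t *: delta_mx a i)^T *m (M + t *: delta_mx a i))
  = \det S * ((1 + t * (invmx S *m M^T) i a) ^+ 2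
               + t ^+ 2 * (1 - (M *m invmx S *m M^T) a a) * invmx S i i).
Proof.
have w_ia : w i 0 = (invmx S *m M^T) i a by rewrite /w /m mulmxA -colE mxE.
have mw : (m^T *m w) 0 0 = (M *m invmx S *m M^T) a a.
  have eXe (X : 'M[R]_n) : (ea^T *m X *m ea) 0 0 = X a a.
    by rewrite /ea trmx_delta -colE -rowE !mxE.
  by rewrite /w /m trmx_mul trmxK -eXe !mulmxA.
have detP : \det (P t) = 1 + t * w i 0.
  by rewrite /P /ei trmx_delta scalemxAl det1D_mul_delta mxE.
rewrite gram_coord_line_congruence det_add_delta !det_mulmx det_tr detP w_ia.
rewrite (@eq_cofactor _ _ _ S); last exact: congruence_off.
by rewrite cofactor_invmx // /rho mw; ring.
Qed.

End GramCoordLine.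

Section GramTraces.
Variables (R : fieldType) (n p : nat) (M : 'M[R]_(n, p)).
Hypothesis gram_unit : M^T *m M \in unitmx.

Lemma sum_sqr_pinv :
  \sum_(a < n) \sum_(i < p) ((invmx (M^T *m M) *m M^T) i a) ^+ 2 = \tr (invmx (M^T *m M)).
Proof.
set X := invmx (M^T *m M) *m M^T.
have invS_tr : (invmx (M^T *m M))^T = invmx (M^T *m M) by rewrite trmx_inv trmx_mul trmxK.
have <- : X *m X^T = invmx (M^T *m M).
  by rewrite trmx_mul trmxK invS_tr !mulmxA -(mulmxA _ M^T) mulVmx ?mul1mx.
rewrite exchange_big /mxtrace; apply: eq_bigr => i _.
by rewrite mxE; apply: eq_bigr => a _; rewrite expr2 [X^T a i]mxE.
Qed.

Lemma sum_pinv_mul :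
  \sum_(a < n) \sum_(i < p) (invmx (M^T *m M) *m M^T) i a * M a i = p%:R.
Proof.
rewrite exchange_big /= -(mxtrace1 R p) -(mulVmx gram_unit) mulmxA /mxtrace.
by apply: eq_bigr => i _; rewrite [RHS]mxE.
Qed.

Lemma mxtrace_hat : \tr (M *m invmx (M^T *m M) *m M^T) = p%:R.
Proof. by rewrite -mulmxA mxtrace_mulC -mulmxA mulVmx // mxtrace1. Qed.

End GramTraces.

Lemma sum_sqr_coord_line (R : comPzRingType) n p (M : 'M[R]_(n, p)) a i t :
  \sum_(b < n) \sum_(j < p) (M + t *: delta_mx a i) b j ^+ 2
  = \sum_(b < n) \sum_(j < p) M b j ^+ 2 + 2 * M a i * t + t ^+ 2.
Proof.
rewrite (bigD1 a) //= [in RHS](bigD1 a) //= (bigD1 i) //= [in RHS](bigD1 i) //=.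
have off b j : (b != a) || (j != i) -> (M + t *: delta_mx a i) b j = M b j.
  by rewrite !mxE -negb_and => /negbTE ->; rewrite mulr0 addr0.
rewrite (eq_bigr (fun j => M a j ^+ 2)) => [|j ji]; last by rewrite off ?ji ?orbT.
rewrite [X in _ + X](eq_bigr (fun b => \sum_(j < p) M b j ^+ 2)) => [|b ba]; last first.
  by apply: eq_bigr => j _; rewrite off ?ba.
by rewrite !mxE !eqxx mulr1; ring.
Qed.

Section GramPositive.
Variable R : realType.

Lemma row_sqnorm_ge0 q (v : 'rV[R]_q) : 0 <= (v *m v^T) 0 0.
Proof. by rewrite mxE; apply: sumr_ge0 => k _; rewrite mxE -expr2 sqr_ge0. Qed.

Lemma row_sqnorm_gt0 q (v : 'rV[R]_q) : v != 0 -> 0 < (v *m v^T) 0 0.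
Proof.
move=> v_neq0; rewrite lt_def row_sqnorm_ge0 andbT; apply: contraNN v_neq0.
rewrite mxE => /eqP vv0; apply/eqP/rowP => k; rewrite mxE.
have sqr_ge0' (j : 'I_q) : true -> 0 <= v 0 j * v^T j 0 by rewrite mxE -expr2 sqr_ge0.
by move/eqP: (psumr_eq0P sqr_ge0' vv0 (i := k) isT); rewrite mxE -expr2 sqrf_eq0 => /eqP.
Qed.

Lemma det_gram_homotopy_neq0 n p (M : 'M[R]_(n, p)) (s : R) :
  \det (M^T *m M) != 0 -> 0 <= s <= 1 ->
  \det ((1 - s) *: (M^T *m M) + s *: 1%:M) != 0.
Proof.
move=> detS_neq0 /andP[s_ge0 s_le1].
have [->|s_neq0] := eqVneq s 0; first by rewrite subr0 scale1r scale0r addr0.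
apply/det0P => -[v v_neq0 vH0].
have : 0 < (v *m ((1 - s) *: (M^T *m M) + s *: 1%:M) *m v^T) 0 0.
  have e : v *m (M^T *m M) *m v^T = (v *m M^T) *m (v *m M^T)^T.
    by rewrite trmx_mul trmxK !mulmxA.
  rewrite mulmxDr mulmxDl -!scalemxAr -!scalemxAl mulmx1 e.
  rewrite [_ 0 0]mxE [X in X + _]mxE [X in _ + X]mxE.
  apply: ltr_wpDl; first by rewrite mulr_ge0 ?subr_ge0 ?row_sqnorm_ge0.
  by rewrite mulr_gt0 ?row_sqnorm_gt0 // lt_def s_neq0.
by rewrite vH0 mul0mx mxE ltxx.
Qed.

(* The determinant is 1 at the identity and never vanishes on the segment to M^T M. *)
Lemma det_gram_gt0 n p (M : 'M[R]_(n, p)) : \det (M^T *m M) != 0 -> 0 < \det (M^T *m M).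
Proof.
move=> detS_neq0.
pose H : 'M[{poly R}]_p :=
  \matrix_(j, k) (((M^T *m M) j k)%:P * (1 - 'X) + ((j == k)%:R)%:P * 'X).
pose f s := (\det H).[s].
have fE s : f s = \det ((1 - s) *: (M^T *m M) + s *: 1%:M).
  rewrite /f -horner_evalE -det_map_mx; congr (\det _).
  by apply/matrixP => j k; rewrite !mxE /= horner_evalE !hornerE mulrC [s * _]mulrC.
have f_neq0 s : 0 <= s <= 1 -> f s != 0 by rewrite fE; exact: det_gram_homotopy_neq0.
have f1 : f 1 = 1 by rewrite fE subrr scale0r add0r scale1r det1.
have <- : f 0 = \det (M^T *m M) by rewrite fE subr0 scale1r scale0r addr0.
rewrite lt_def f_neq0 ?lexx ?ler01 //= leNgt; apply/negP => f0_lt0.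
have [c c01 fc0] : exists2 c, c \in `[0, 1] & f c = 0.
  apply: IVT; [exact: ler01 | | by rewrite f1 ge_min le_max ler01 orbT andbT ltW].
  by apply: continuous_subspaceT => x; exact: continuous_horner.
by move: c01 (f_neq0 c); rewrite in_itv /= fc0 eqxx => /[swap]/[apply].
Qed.

Lemma sum_sqr_gt0 n p (M : 'M[R]_(n, p)) : (0 < p)%N -> \det (M^T *m M) != 0 ->
  0 < \sum_(a < n) \sum_(i < p) M a i ^+ 2.
Proof.
move=> p_gt0 detS_neq0.
have sqr_ge0' (a : 'I_n) (i : 'I_p) : true -> 0 <= M a i ^+ 2 by rewrite sqr_ge0.
have row_ge0 (a : 'I_n) : true -> 0 <= \sum_(i < p) M a i ^+ 2.
  by move=> _; apply: sumr_ge0 => i; exact: sqr_ge0'.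
rewrite lt_def (sumr_ge0 _ row_ge0) andbT; apply: contraNN detS_neq0 => /eqP sum0.
have -> : M = 0.
  apply/matrixP => a i; apply/eqP; rewrite mxE -sqrf_eq0.
  exact/eqP/(psumr_eq0P (sqr_ge0' a) (psumr_eq0P row_ge0 sum0 (i := a) isT) (i := i) isT).
rewrite mulmx0 -(scale0r (1%:M : 'M[R]_p)) detZ det1 mulr1 expr0n.
by rewrite eqn0Ngt p_gt0.
Qed.

End GramPositive.

Section MSVS1Laplacian.
Variables (R : realType) (n p : nat) (gamma : R) (M : 'M[R]_(n, p)).
Hypotheses (p_gt0 : (0 < p)%N) (detS_neq0 : \det (M^T *m M) != 0).

Let S := M^T *m M.
Let S_unit : S \in unitmx. Proof. by rewrite unitmxE unitfE. Qed.
Let detS_gt0 : 0 < \det S. Proof. exact: det_gram_gt0. Qed.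
Let F0 := \sum_(a < n) \sum_(i < p) M a i ^+ 2.
Let F0_gt0 : 0 < F0. Proof. exact: sum_sqr_gt0. Qed.
Let alpha : R := - ((n%:R - p%:R - 1) / 2).
Let beta : R := - gamma / 2.
Let v a i := (invmx S *m M^T) i a.
Let rho a := 1 - (M *m invmx S *m M^T) a a.
Let s i := invmx S i i.

Let coord_line_pi_MSVS1 a i :
  coord_line (pi_MSVS1 gamma) M a i
  = fun t => powR (quad (\det S) (\det S * (2 * v a i)) (\det S * (v a i ^+ 2 + rho a * s i)) t) alpha
           * powR (quad F0 (2 * M a i) 1 t) beta.
Proof.
apply/funext => t; rewrite /coord_line /pi_MSVS1 det_gram_coord_line // /frob.
rewrite -powR12_sqrt; last by apply: sumr_ge0 => b _; apply: sumr_ge0 => j _; exact: sqr_ge0.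
rewrite sum_sqr_coord_line -/F0 -powRrM [2^-1 * _]mulrC /quad.
by congr (powR _ _ * powR _ _); rewrite /v /rho /s /S; ring.
Qed.

Let d2_coord_line a i :=
  derive2_powR_quad alpha beta (\det S * (2 * v a i)) (\det S * (v a i ^+ 2 + rho a * s i))
    (2 * M a i) 1 detS_gt0 F0_gt0.

Lemma coord_line_pi_MSVS1_derivable a i :
  (\forall t \near 0, derivable (coord_line (pi_MSVS1 gamma) M a i) t 1)
  /\ derivable (derive1 (coord_line (pi_MSVS1 gamma) M a i)) 0 1.
Proof. by rewrite coord_line_pi_MSVS1; case: (d2_coord_line a i). Qed.

Let d2_partial_pi_MSVS1 a i :
  d2_partial (pi_MSVS1 gamma) M a i = pi_MSVS1 gamma M *
    ((4 * alpha ^+ 2 - 2 * alpha) * v a i ^+ 2 + 2 * alpha * (rho a * s i)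
     + (4 * beta ^+ 2 - 4 * beta) / F0 ^+ 2 * M a i ^+ 2
     + 8 * alpha * beta / F0 * (v a i * M a i) + 2 * beta / F0).
Proof.
have pi_M : pi_MSVS1 gamma M = coord_line (pi_MSVS1 gamma) M a i 0.
  by rewrite /coord_line scale0r addr0.
rewrite /d2_partial pi_M coord_line_pi_MSVS1 !quad0.
case: (d2_coord_line a i) => _ _ ->; congr (_ * _).
by field; rewrite !gt_eqF.
Qed.

(* The trace terms cancel since 2 alpha = -(n - p - 1). *)
Let sum_d2_partial_coeffs :
  \sum_(a < n) \sum_(i < p)
    ((4 * alpha ^+ 2 - 2 * alpha) * v a i ^+ 2 + 2 * alpha * (rho a * s i)
     + (4 * beta ^+ 2 - 4 * beta) / F0 ^+ 2 * M a i ^+ 2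
     + 8 * alpha * beta / F0 * (v a i * M a i) + 2 * beta / F0)
  = gamma * (gamma + (n * p)%:R - 2 * (p ^ 2)%:R - 2 * p%:R + 2) / F0.
Proof.
under eq_bigr => a _ do rewrite !big_split /= -!mulr_sumr.
rewrite !big_split /= -!mulr_sumr sum_sqr_pinv // sum_pinv_mul //.
have sum_rho : \sum_(a < n) rho a = n%:R - p%:R.
  by rewrite sumrB sumr_const card_ord -(mxtrace_hat S_unit).
have sum_s : \sum_(i < p) s i = \tr (invmx S) by [].
rewrite -mulr_suml sum_rho sum_s -/F0 !sumr_const !card_ord -mulrnA -mulr_natr.
by rewrite /alpha /beta natrM natrX; field; rewrite gt_eqF.
Qed.

Lemma laplacian_pi_MSVS1 :
  laplacian (pi_MSVS1 gamma) M
  = gamma * (gamma + (n * p)%:R - 2 * (p ^ 2)%:R - 2 * p%:R + 2)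
    * (frob M) ^- 2 * pi_MSVS1 gamma M.
Proof.
rewrite /laplacian (eq_bigr _ (fun a _ => eq_bigr _ (fun i _ => d2_partial_pi_MSVS1 a i))).
under eq_bigr => a _ do rewrite -mulr_sumr.
rewrite -mulr_sumr sum_d2_partial_coeffs /frob -/F0 sqr_sqrtr ?ltW //.
by rewrite mulrC mulrA.
Qed.

End MSVS1Laplacian.

Theorem proposition2 (R : realType) (n p : nat) (gamma : R)
  (hp : (0 < p)%N) (hn : (0 < n)%N) (hnp : (p + 1 < n)%N) (hgamma : 0 <= gamma)
  (M : 'M[R]_(n, p)) (hM : \det (M^T *m M) != 0) :
  (forall (a : 'I_n) (i : 'I_p),
     (\forall t \near 0, derivable (coord_line (pi_MSVS1 gamma) M a i) t 1)
     /\ derivable (derive1 (coord_line (pi_MSVS1 gamma) M a i)) 0 1)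
  /\
  laplacian (pi_MSVS1 gamma) M
  = gamma * (gamma + (n * p)%:R - 2 * (p ^ 2)%:R - 2 * p%:R + 2)
    * (frob M) ^- 2 * pi_MSVS1 gamma M.
Proof.
split; [exact: coord_line_pi_MSVS1_derivable | exact: laplacian_pi_MSVS1].
Qed.
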